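(* Fix $K$ and $K_T$ with $0<K_T<K$. Among all partitions $\mathcal{C}$ of $[N]$ into $K$ equally sized clusters, the set of maximizers of $\operatorname{Tr}\big(\operatorname{Cov}_{\mathbf{Z}\sim\mathcal{D}(\mathcal{C})}(\mathbf{Z},\mathbf{e})\big)$ equals the set of minimizers of $\mathcal{H}(\mathcal{C})$, where $\operatorname{Cov}(\mathbf{Z},\mathbf{e})=\mathbb{E}\big[(\mathbf{Z}-\mathbb{E}\mathbf{Z})(\mathbf{e}-\mathbb{E}\mathbf{e})^T\big]$ and $\mathbf{e}=(e_1(\mathbf{Z}),\dots,e_N(\mathbf{Z}))$.
   Context: Setting: $N$ experimental units $[N]$ and $M$ interference units $[M]$, with known weights $w_{is}\ge 0$; assume $\sum_{s} w_{is}>0$ for every $i$ and $\sum_i w_{is}>0$ for every $s$. For $\mathbf{Z}\in\{-1,1\}^N$, dose $d_s=\frac{\sum_{i} w_{is}Z_i}{\sum_{i} w_{is}}$ and exposure $e_i(\mathbf{Z})=\frac{\sum_{s} w_{is}d_s}{\sum_{s} w_{is}}$. Balanced $K$-cluster randomized design $\mathcal{D}(\mathcal{C})$: $K\ge2$ divides $N$, $\mathcal{C}$ is a partition of $[N]$ into $K$ clusters of size $N/K$, $\mathcal{C}(i)$ is the cluster containing $i$; choose $K_T$ clusters uniformly at random, set $Z_i=1$ on them and $Z_i=-1$ elsewhere. $\mathcal{H}(\mathcal{C})=\sum_{i\in[N]}\sum_{j\in[N]\setminus\mathcal{C}(i)}\sum_{s\in[M]}\frac{w_{is}}{\sum_{s'}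 w_{is'}}\frac{w_{js}}{\sum_{k} w_{ks}}$. *)

From mathcomp Require Import all_boot all_order all_algebra.
Set Implicit Arguments. Unset Strict Implicit. Unset Printing Implicit Defensive.
Import Order.TTheory GRing.Theory Num.Theory.
Local Open Scope ring_scope.

Section Defs.
Variable R : realFieldType.
Variables N M : nat.
Variable w : 'I_N -> 'I_M -> R.

Definition dose (Z : 'I_N -> R) (s : 'I_M) : R :=
  (\sum_(i < N) w i s * Z i) / (\sum_(i < N) w i s).

Definition exposure (Z : 'I_N -> R) (i : 'I_N) : R :=
  (\sum_(s < M) w i s * dose Z s) / (\sum_(s < M) w i s).

Definition balanced_partition (K : nat) (C : {set {set 'I_N}}) : bool :=
  [&& partition C [set: 'I_N], #|C| == K & [forall B in C, #|B| == (N %/ K)%N]].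

(* the support of D(C): sets of K_T treated clusters (chosen uniformly) *)
Definition treated_choices (KT : nat) (C : {set {set 'I_N}}) :
  {set {set {set 'I_N}}} :=
  [set S : {set {set 'I_N}} | (S \subset C) && (#|S| == KT)].

Definition Zof (C : {set {set 'I_N}}) (S : {set {set 'I_N}}) (i : 'I_N) : R :=
  if pblock C i \in S then 1 else -1.

Definition Edesign (KT : nat) (C : {set {set 'I_N}})
  (f : {set {set 'I_N}} -> R) : R :=
  (\sum_(S in treated_choices KT C) f S) / #|treated_choices KT C|%:R.

Definition trace_cov (KT : nat) (C : {set {set 'I_N}}) : R :=
  \sum_(i < N)
    Edesign KT C (fun S =>
      (Zof C S i - Edesign KT C (fun S' => Zof C S' i)) *
      (exposure (Zof C S) i - Edesign KT C (fun S' => exposure (Zof C S') i))).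

Definition Hcal (C : {set {set 'I_N}}) : R :=
  \sum_(i < N) \sum_(j < N | j \notin pblock C i) \sum_(s < M)
    (w i s / \sum_(s' < M) w i s') * (w j s / \sum_(k < N) w k s).

End Defs.

(* Under a cluster design every unit carries the sign z_A of its cluster A.
   Transpositions of clusters preserve the design, so all signs have the same
   mean mu and all pairs of distinct signs the same product moment gamma;
   both are then determined by the constraint sum_A z_A = 2 K_T - K.  The
   exposure is linear in Z with weights whose rows sum to 1, and the weight a
   unit puts on units outside its own cluster is exactly its summand in H(C).
   Hence Tr Cov(Z, e) = N (1 - mu^2) - (1 - gamma) H(C), and gamma < 1 since
   0 < K_T < K: the trace is a strictly decreasing affine function of H. *)
From mathcomp Require Import all_boot all_order all_algebra.
From mathcomp Require Import fingroup perm ring lra.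
Import Order.TTheory GRing.Theory Num.Theory.
Local Open Scope ring_scope.

(* The mean of a cluster sign and the product moment of two distinct cluster
   signs; they are forced by [sum_assign]: [K mu = 2 K_T - K] and
   [1 + (K - 1) gamma = (2 K_T - K) mu]. *)
Definition treat_mean (R : realFieldType) (KT K : nat) : R :=
  (2 * KT%:R - K%:R) / K%:R.

Definition treat_cross (R : realFieldType) (KT K : nat) : R :=
  ((2 * KT%:R - K%:R) * treat_mean R KT K - 1) / (K%:R - 1).

Section Design.
Context {R : realFieldType} {N KT : nat} {C : {set {set 'I_N}}}.

Local Notation choices := (treated_choices KT C).
Local Notation E := (@Edesign R N KT C).

Lemma eq_Edesign {f g} : {in choices, f =1 g} -> E f = E g.
Proof. by move=> fg; rewrite /Edesign (eq_bigr _ fg). Qed.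

Lemma Edesign_add f g : E (fun S => f S + g S) = E f + E g.
Proof. by rewrite /Edesign big_split mulrDl. Qed.

Lemma Edesign_scale a f : E (fun S => a * f S) = a * E f.
Proof. by rewrite /Edesign -mulr_sumr mulrA. Qed.

Lemma Edesign_sum (I : finType) (P : pred I) (F : I -> {set {set 'I_N}} -> R) :
  E (fun S => \sum_(j | P j) F j S) = \sum_(j | P j) E (F j).
Proof. by rewrite /Edesign exchange_big /= mulr_suml. Qed.

Lemma Edesign_perm {p : {perm {set 'I_N}}} F :
  (forall A, (p A \in C) = (A \in C)) -> E F = E (fun S => F (p @: S)).
Proof.
move=> pC; rewrite /Edesign (reindex_inj (imset_inj (@perm_inj _ p))) /=.
congr (_ / _); apply: eq_bigl => S; rewrite !inE card_imset; last exact: perm_inj.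
congr (_ && _); apply/subsetP/subsetP => sub A.
  by move=> AS; rewrite -pC; apply/sub/imset_f.
by case/imsetP => B BS ->; rewrite pC; apply: sub.
Qed.

Definition assign (A : {set 'I_N}) (S : {set {set 'I_N}}) : R :=
  if A \in S then 1 else -1.

Lemma assign_perm (p : {perm {set 'I_N}}) A (S : {set {set 'I_N}}) :
  assign (p A) (p @: S) = assign A S.
Proof. by rewrite /assign mem_imset //; exact: perm_inj. Qed.

Lemma assign_mulss A S : assign A S * assign A S = 1.
Proof. by rewrite /assign; case: ifP; rewrite ?mulr1 ?mulrNN ?mulr1. Qed.

Lemma tperm_stab {B B'} : B \in C -> B' \in C ->
  forall A, (tperm B B' A \in C) = (A \in C).
Proof. by move=> hB hB' A; case: tpermP => [->|->|] //; rewrite hB hB'. Qed.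

Context {K : nat}.
Hypothesis cardC : #|C| = K.
Hypothesis KT_le : (KT <= K)%N.

Lemma Edesign_const a : E (fun=> a) = a.
Proof.
have n_gt0 : (0 < #|choices|)%N by rewrite cards_draws cardC bin_gt0.
by rewrite /Edesign sumr_const -[a *+ _]mulr_natr mulfK // pnatr_eq0 -lt0n.
Qed.

Lemma Edesign_cov X Y :
  E (fun S => (X S - E X) * (Y S - E Y)) = E (fun S => X S * Y S) - E X * E Y.
Proof.
rewrite (@eq_Edesign _ (fun S => X S * Y S + (- E X * Y S + (- E Y * X S
   + E X * E Y)))); last by move=> S _; ring.
by rewrite !Edesign_add !Edesign_scale Edesign_const /Edesign; ring.
Qed.

Lemma sum_assign S : S \in choices -> \sum_(A in C) assign A S = 2 * KT%:R - K%:R.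
Proof.
rewrite inE => /andP[sub /eqP cardS].
rewrite (big_setID S) /= (setIidPr sub).
rewrite (eq_bigr (fun=> 1)); last by move=> A AS; rewrite /assign AS.
rewrite [X in _ + X](eq_bigr (fun=> -1)); last first.
  by move=> A; rewrite inE => /andP[/negbTE AS _]; rewrite /assign AS.
by rewrite !sumr_const cardsD (setIidPr sub) cardS cardC mulNrn natrB //; ring.
Qed.

Hypothesis K_gt1 : (1 < K)%N.

Lemma Edesign_assign A : A \in C -> E (assign A) = treat_mean R KT K.
Proof.
move=> AC.
have sym B : B \in C -> E (assign B) = E (assign A).
  move=> BC; rewrite (Edesign_perm _ (tperm_stab BC AC)).
  by apply: eq_Edesign => S _; rewrite -[X in assign X](tpermR B A) assign_perm.
have : K%:R * E (assign A) = 2 * KT%:R - K%:R.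
  rewrite -[RHS]Edesign_const -(eq_Edesign sum_assign) Edesign_sum.
  by rewrite (eq_bigr _ sym) sumr_const cardC mulr_natl.
have K_neq0 : K%:R != 0 :> R by rewrite pnatr_eq0 -lt0n ltnW.
by rewrite /treat_mean => <-; rewrite [K%:R * _]mulrC mulfK.
Qed.

Lemma Edesign_assign2 A B : A \in C -> B \in C -> A != B ->
  E (fun S => assign A S * assign B S) = treat_cross R KT K.
Proof.
move=> AC BC AB.
have sym B' : B' \in C :\ A ->
    E (fun S => assign A S * assign B' S) = E (fun S => assign A S * assign B S).
  rewrite !inE => /andP[B'A B'C]; rewrite (Edesign_perm _ (tperm_stab B'C BC)).
  apply: eq_Edesign => S _; rewrite -[X in _ * assign X _ = _](tpermR B' B).
  by rewrite -{1}(tpermD B'A (_ : B != A)) 1?eq_sym // !assign_perm.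
have : E (fun S => \sum_(B' in C) assign A S * assign B' S)
       = (2 * KT%:R - K%:R) * treat_mean R KT K.
  rewrite -(Edesign_assign A AC) -Edesign_scale.
  by apply: eq_Edesign => S hS; rewrite -mulr_sumr sum_assign // mulrC.
rewrite Edesign_sum (bigD1 A) //= (eq_Edesign (g := fun=> 1)); last first.
  by move=> S _; exact: assign_mulss.
rewrite Edesign_const (eq_bigl (mem (C :\ A))); last by move=> B'; rewrite !inE andbC.
have cardCA : #|C :\ A| = (K - 1)%N by rewrite -cardC (cardsD1 A C) AC add1n subn1.
rewrite (eq_bigr _ sym) sumr_const cardCA -[_ *+ (K - 1)]mulr_natr.
rewrite natrB ?(ltnW K_gt1) => [moments|//].
have K1_neq0 : K%:R - 1 != 0 :> R by rewrite subr_eq0 pnatr_eq1 gtn_eqF.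
by rewrite /treat_cross -moments; field.
Qed.

End Design.

Definition exposure_weight {R : realFieldType} {N M : nat} (w : 'I_N -> 'I_M -> R)
  (i j : 'I_N) : R :=
  \sum_(s < M) (w i s / \sum_(s' < M) w i s') * (w j s / \sum_(k < N) w k s).

Section Exposure.
Context {R : realFieldType} {N M : nat} {w : 'I_N -> 'I_M -> R}.
Local Notation exposure_weight := (exposure_weight w).

Lemma exposure_linear Z i : exposure w Z i = \sum_j exposure_weight i j * Z j.
Proof.
rewrite /exposure /dose /exposure_weight.
under [RHS]eq_bigr => j _ do rewrite mulr_suml.
rewrite exchange_big /= mulr_suml; apply: eq_bigr => s _.
rewrite !mulr_suml !mulr_sumr !mulr_suml; apply: eq_bigr => j _; ring.
Qed.

Hypothesis row_pos : forall i, 0 < \sum_(s < M) w i s.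
Hypothesis col_pos : forall s, 0 < \sum_(i < N) w i s.

Lemma exposure_weight_rowsum i : \sum_j exposure_weight i j = 1.
Proof.
rewrite /exposure_weight exchange_big /= -[RHS](divff (lt0r_neq0 (row_pos i))).
rewrite mulr_suml; apply: eq_bigr => s _.
by rewrite -mulr_sumr -mulr_suml divff ?mulr1 // gt_eqF.
Qed.

Context {K KT : nat} {C : {set {set 'I_N}}}.
Hypothesis partC : partition C [set: 'I_N].
Hypothesis cardC : #|C| = K.
Hypothesis KT_le : (KT <= K)%N.
Hypothesis K_gt1 : (1 < K)%N.

Local Notation E := (@Edesign R N KT C).
Local Notation mu := (treat_mean R KT K).
Local Notation gamma := (treat_cross R KT K).
Local Notation Z := (@Zof R N C).

Lemma pblock_cluster i : pblock C i \in C.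
Proof. by case/and3P: partC => /eqP coverC _ _; rewrite pblock_mem // coverC inE. Qed.

Lemma cov_Zof i j :
  E (fun S => Z S i * Z S j) - E (fun S => Z S i) * E (fun S => Z S j)
  = (1 - mu ^+ 2) - (1 - gamma) * (j \notin pblock C i)%:R.
Proof.
(* [Z S k] unfolds to [assign (pblock C k) S]. *)
have EZ k : E (fun S => Z S k) = mu by exact: Edesign_assign (pblock_cluster k).
case/and3P: partC => /eqP coverC trivC _.
rewrite !EZ; case: (boolP (j \in pblock C i)) => ji /=.
  have same : pblock C j = pblock C i.
    by apply/eqP; rewrite eq_sym eq_pblock // coverC inE.
  have -> : E (fun S => Z S i * Z S j) = E (fun=> 1).
    by apply: eq_Edesign => S _; rewrite /Zof same; exact: assign_mulss.
  by rewrite (Edesign_const cardC KT_le); ring.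
have diff : pblock C i != pblock C j.
  by rewrite eq_pblock // coverC inE.
rewrite (Edesign_assign2 cardC KT_le K_gt1 _ _ (pblock_cluster i)
  (pblock_cluster j) diff).
by ring.
Qed.

Lemma unit_cov i :
  E (fun S => (Z S i - E (fun S' => Z S' i)) *
              (exposure w (Z S) i - E (fun S' => exposure w (Z S') i)))
  = (1 - mu ^+ 2) - (1 - gamma) * \sum_(j | j \notin pblock C i) exposure_weight i j.
Proof.
have EZe : E (fun S => Z S i * exposure w (Z S) i)
    = \sum_j exposure_weight i j * E (fun S => Z S i * Z S j).
  transitivity (E (fun S => \sum_j exposure_weight i j * (Z S i * Z S j))).
    apply: eq_Edesign => S _; rewrite exposure_linear mulr_sumr.
    by apply: eq_bigr => j _; ring.
  by rewrite Edesign_sum; apply: eq_bigr => j _; rewrite Edesign_scale.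
have Ee : E (fun S => exposure w (Z S) i)
    = \sum_j exposure_weight i j * E (fun S => Z S j).
  transitivity (E (fun S => \sum_j exposure_weight i j * Z S j)).
    by apply: eq_Edesign => S _; rewrite exposure_linear.
  by rewrite Edesign_sum; apply: eq_bigr => j _; rewrite Edesign_scale.
rewrite (Edesign_cov cardC KT_le) EZe Ee mulr_sumr -sumrB.
under eq_bigr => j _ do rewrite [X in _ - X]mulrCA -mulrBr cov_Zof.
rewrite (eq_bigr (fun j => (1 - mu ^+ 2) * exposure_weight i j - (1 - gamma) *
   (if j \notin pblock C i then exposure_weight i j else 0))); last first.
  by move=> j _; case: (j \notin pblock C i) => /=; ring.
by rewrite sumrB -!mulr_sumr exposure_weight_rowsum mulr1 -big_mkcond.
Qed.

Lemma trace_cov_affine :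
  trace_cov w KT C = N%:R * (1 - mu ^+ 2) - (1 - gamma) * Hcal w C.
Proof.
rewrite /trace_cov (eq_bigr _ (fun i _ => unit_cov i)) sumrB sumr_const card_ord.
by rewrite -mulr_sumr mulr_natl.
Qed.

End Exposure.

Lemma treat_cross_lt1 (R : realFieldType) KT K :
  (0 < KT)%N -> (KT < K)%N -> treat_cross R KT K < 1.
Proof.
move=> KT_gt0 KT_ltK.
have KT_pos : (0 : R) < KT%:R by rewrite ltr0n.
have KT_lt : (KT%:R : R) < K%:R by rewrite ltr_nat.
have K_pos : (0 : R) < K%:R by rewrite (lt_trans KT_pos).
have K1_pos : (0 : R) < K%:R - 1.
  by rewrite subr_gt0 ltr1n (leq_ltn_trans KT_gt0 KT_ltK).
have -> : treat_cross R KT K =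
    1 - 4 * KT%:R * (K%:R - KT%:R) / (K%:R * (K%:R - 1)).
  by rewrite /treat_cross /treat_mean; field; rewrite !gt_eqF.
by rewrite gtrBl divr_gt0 ?mulr_gt0 // subr_gt0.
Qed.

Theorem lemma2 (R : realFieldType) (N M : nat) (w : 'I_N -> 'I_M -> R)
  (K KT : nat)
  (w_ge0 : forall i s, 0 <= w i s)
  (row_pos : forall i, 0 < \sum_(s < M) w i s)
  (col_pos : forall s, 0 < \sum_(i < N) w i s)
  (K_ge2 : (2 <= K)%N) (K_dvd : (K %| N)%N)
  (KT_pos : (0 < KT)%N) (KT_lt : (KT < K)%N)
  (C : {set {set 'I_N}}) (hC : balanced_partition K C) :
  (forall C' : {set {set 'I_N}}, balanced_partition K C' ->
     trace_cov w KT C' <= trace_cov w KT C)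
  <->
  (forall C' : {set {set 'I_N}}, balanced_partition K C' ->
     Hcal w C <= Hcal w C').
Proof.
have trace C' : balanced_partition K C' ->
    trace_cov w KT C' = N%:R * (1 - treat_mean R KT K ^+ 2)
                        - (1 - treat_cross R KT K) * Hcal w C'.
  case/and3P => partC' /eqP cardC' _.
  by rewrite (trace_cov_affine row_pos col_pos partC' cardC') // ltnW.
have gamma_lt1 : 0 < 1 - treat_cross R KT K.
  by rewrite subr_gt0 treat_cross_lt1.
by split=> opt C' hC'; move: (opt C' hC'); rewrite !trace // lerD2l lerN2 ler_pM2l.
Qed.
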